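(* Let $\Xi=\langle\Sigma,\mathcal{A}\rangle$ be a planning domain in which every action has cost $1$, $\mathcal{I}\subseteq\Sigma$ an initial state, $\mathcal{G}$ a finite set of candidate goals containing the actual goal $G^*$, and $O=\langle o_1,\dots,o_n\rangle$, $n\ge 1$, the complete (100\%) sequence of observations, i.e. $O$ is itself a plan that leads from $\mathcal{I}$ to a state satisfying $G^*$. For each $G\in\mathcal{G}$, let $C^G$ be a set of operator-counting constraints for $\mathcal{I}$ with respect to the planning instance $\langle\Xi,\mathcal{I},G\rangle$, let $k_a$ be the number of occurrences of action $a$ in $O$, and let $h_{hc}^G$ be the optimal value (or $\infty$ if infeasible) of the linear program: minimize $\sum_{a\in\mathcal{A}}\mathsf{Y}_a$ subject to $C^G$, $\mathsf{Y}_a\ge 0$ and $\mathsf{Y}_a\ge k_a$ for all $a\in\mathcal{A}$. Let $m=\min_{G\in\mathcal{G}}h_{hc}^G$, $U=1+\frac{m-|O|}{m}$, and let the returned set be $R=\{G\in\mathcal{G} : h_{hc}^G\le m\cdot U\}$. Then $G^*\in R$.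
   Context: An $s$-plan for an instance $\langle\Xi,\mathcal{I},G\rangle$ is a valid action sequence from state $s$ to a state satisfying $G$; for such a plan $\pi$, $\mathsf{Y}^\pi_a$ is the number of occurrences of $a$ in $\pi$. Given non-negative variables including $\mathsf{Y}_a$ for each $a\in\mathcal{A}$ (plus possibly auxiliary variables), a set of linear inequalities is an operator-counting constraint for $s$ if for every $s$-plan $\pi$ there is a feasible solution with $\mathsf{Y}_a=\mathsf{Y}^\pi_a$ for all $a$. The set $R$ is the output of the paper's goal recognition procedure using the hard-constrained heuristic $h_{hc}$ and the uncertainty ratio $U$. *)

From HB Require Import structures.
From mathcomp Require Import all_boot all_order all_algebra.
From mathcomp Require Import boolp classical_sets reals constructive_ereal ereal.
Set Implicit Arguments. Unset Strict Implicit. Unset Printing Implicit Defensive.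
Import Order.TTheory GRing.Theory Num.Theory.
Local Open Scope classical_set_scope.
Local Open Scope ring_scope.

(* Sigma = the finite set of facts F; states are subsets of F; actions A. *)
Record domain (F A : finType) := Domain {
  pre : A -> {set F};
  add : A -> {set F};
  del : A -> {set F} }.

Fixpoint exec (F A : finType) (D : domain F A) (s : {set F}) (pi : seq A)
  : option {set F} :=
  match pi with
  | [::] => Some s
  | a :: pi' => if pre D a \subset s
                then exec D ((s :\: del D a) :|: add D a) pi'
                else None
  end.

Definition is_plan (F A : finType) (D : domain F A) (s G : {set F}) (pi : seq A) : Prop :=
  exists s', exec D s pi = Some s' /\ G \subset s'.

Definition occ (A : finType) (R : realType) (pi : seq A) : A -> R :=
  fun a => (count_mem a pi)%:R.

Record lin_ineq (A : finType) (R : realType) (p : nat) := LinIneq {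
  cY : A -> R;
  cZ : 'I_p -> R;
  rhs : R }.

Record constr_set (A : finType) (R : realType) := ConstrSet {
  naux : nat;
  ncons : nat;
  con : 'I_ncons -> lin_ineq A R naux }.

Definition sat_ineq (A : finType) (R : realType) (p : nat) (c : lin_ineq A R p)
  (Y : A -> R) (Z : 'I_p -> R) : Prop :=
  rhs c <= \sum_a cY c a * Y a + \sum_j cZ c j * Z j.

Definition feasible (A : finType) (R : realType) (C : constr_set A R)
  (Y : A -> R) (Z : 'I_(naux C) -> R) : Prop :=
  (forall a, 0 <= Y a) /\ (forall j, 0 <= Z j) /\
  (forall i, sat_ineq (@con _ _ C i) Y Z).

Definition is_opc (F A : finType) (R : realType) (D : domain F A) (s G : {set F})
  (C : constr_set A R) : Prop :=
  forall pi, is_plan D s G pi -> exists Z, @feasible _ _ C (occ R pi) Z.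

Definition h_hc (A : finType) (R : realType) (C : constr_set A R) (k : A -> R) : \bar R :=
  ereal_inf [set (\sum_a Y a)%:E | Y in
               [set Y | exists Z, @feasible _ _ C Y Z /\ (forall a, k a <= Y a)]].

Section Recognition.
Variables (F A : finType) (R : realType).
Variables (cands : {set {set F}}) (C : {set F} -> constr_set A R) (O : seq A).

Definition hG (G : {set F}) : \bar R := h_hc (C G) (occ R O).

Definition m_min : \bar R := ereal_inf [set hG G | G in [set G | G \in cands]].

(* threshold m * U, where U = 1 + (m - |O|)/m.  If m = +oo (or -oo), the threshold
   is taken to be m itself (degenerate case, cannot occur under the hypotheses). *)
Definition threshold : \bar R :=
  match m_min with
  | EFin r => (r * (1 + (r - (size O)%:R) / r))%:E
  | x => x
  end.

Definition recognized : set {set F} :=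
  [set G | G \in cands /\ (hG G <= threshold)%E].
End Recognition.

(* With complete observations the counts k_a sum to |O|, so the hard constraints
   Y_a >= k_a force h_hc^G >= |O| for every goal G.  Since O is itself a plan for
   G*, the vector Y = k is feasible for the operator-counting constraints of G*,
   whence h_hc^{G*} <= |O|.  Thus m = h_hc^{G*} = |O|, the uncertainty ratio is
   U = 1, and G* meets the threshold m * U = |O|. *)
From HB Require Import structures.
From mathcomp Require Import all_boot all_order all_algebra.
From mathcomp Require Import boolp classical_sets reals constructive_ereal ereal.
Set Implicit Arguments. Unset Strict Implicit. Unset Printing Implicit Defensive.
Import Order.TTheory GRing.Theory Num.Theory.
Local Open Scope classical_set_scope.
Local Open Scope ring_scope.

Lemma sum_count_mem (A : finType) (s : seq A) :
  (\sum_a count_mem a s)%N = size s.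
Proof.
elim: s => [|x s IHs] /=; first by rewrite big1.
rewrite big_split /= IHs (bigD1 x) //= eqxx big1 ?addn0 // => b /negbTE.
by rewrite eq_sym => ->.
Qed.

Lemma sum_occ (A : finType) (R : realType) (s : seq A) :
  \sum_a occ R s a = (size s)%:R.
Proof. by rewrite /occ -natr_sum sum_count_mem. Qed.

Section HardConstrainedHeuristic.
Variables (A : finType) (R : realType) (C : constr_set A R).

Lemma h_hc_ge_sum (k : A -> R) : ((\sum_a k a)%:E <= h_hc C k)%E.
Proof.
apply: le_ereal_inf_tmp => _ [Y [Z [_ le_kY]] <-].
by rewrite lee_fin; apply: ler_sum => a _; apply: le_kY.
Qed.

Lemma h_hc_le_feasible (k Y : A -> R) (Z : 'I_(naux C) -> R) :
  @feasible _ _ C Y Z -> (forall a, k a <= Y a) -> (h_hc C k <= (\sum_a Y a)%:E)%E.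
Proof. by move=> feasYZ le_kY; apply: ereal_inf_lbound; exists Y => //; exists Z. Qed.

Lemma h_hc_occ_ge_size (s : seq A) : (((size s)%:R)%:E <= h_hc C (occ R s))%E.
Proof. by rewrite -sum_occ; apply: h_hc_ge_sum. Qed.

Lemma h_hc_occ_plan (F : finType) (D : domain F A) (I G : {set F}) (pi : seq A) :
  is_opc D I G C -> is_plan D I G pi -> h_hc C (occ R pi) = ((size pi)%:R)%:E.
Proof.
move=> opcC plan_pi; apply/le_anti/andP; split; last exact: h_hc_occ_ge_size.
have [Z feasZ] := opcC _ plan_pi.
by rewrite -sum_occ; apply: h_hc_le_feasible feasZ _.
Qed.

End HardConstrainedHeuristic.

Lemma m_min_attained (F A : finType) (R : realType) (cands : {set {set F}})
    (C : {set F} -> constr_set A R) (O : seq A) (G : {set F}) :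
  G \in cands -> (forall G', (hG C O G <= hG C O G')%E) ->
  m_min cands C O = hG C O G.
Proof.
move=> candG minG; apply/le_anti/andP; split.
  by apply: ereal_inf_lbound; exists G.
by apply: le_ereal_inf_tmp => _ [G' _ <-].
Qed.

(* The ratio (r - r) / r vanishes even for r = 0, where division returns 0. *)
Lemma threshold_size (F A : finType) (R : realType) (cands : {set {set F}})
    (C : {set F} -> constr_set A R) (O : seq A) :
  m_min cands C O = ((size O)%:R)%:E -> threshold cands C O = ((size O)%:R)%:E.
Proof. by rewrite /threshold => ->; rewrite subrr mul0r addr0 mulr1. Qed.

Theorem proposition2 (F A : finType) (R : realType) (D : domain F A)
  (I : {set F}) (cands : {set {set F}}) (Gstar : {set F}) (O : seq A)
  (C : {set F} -> constr_set A R) :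
  Gstar \in cands ->
  (0 < size O)%N ->
  is_plan D I Gstar O ->
  (forall G, G \in cands -> is_opc D I G (C G)) ->
  recognized cands C O Gstar.
Proof.
move=> candGstar _ plan_O opcC.
have hGstar : hG C O Gstar = ((size O)%:R)%:E.
  exact: h_hc_occ_plan (opcC _ candGstar) plan_O.
have m_size : m_min cands C O = ((size O)%:R)%:E.
  by rewrite -hGstar; apply: m_min_attained => // G; rewrite hGstar h_hc_occ_ge_size.
by split => //; rewrite (threshold_size m_size) hGstar.
Qed.
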